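(* Let $X$ be a homogeneous chain that is not simple. The following are equivalent: (1) the topological group $(\mathrm{Aut}(X),\tau_p)$ (respectively $(\mathrm{Aut}(X),\tau_\partial)$) is Roelcke precompact; (2) for every proper regular interval $J$ of $X$ the topological groups $(\mathrm{Aut}(J),\tau_p)$ (respectively $(\mathrm{Aut}(J),\tau_\partial)$) and $(\mathrm{Aut}(X/J),\tau_\partial)$ are Roelcke precompact; (3) there exists a proper regular interval $J$ of $X$ such that the topological groups $(\mathrm{Aut}(J),\tau_p)$ (respectively $(\mathrm{Aut}(J),\tau_\partial)$) and $(\mathrm{Aut}(X/J),\tau_\partial)$ are Roelcke precompact.
   Context: Chain: linearly ordered set; $\mathrm{Aut}(Y)$: group of order-preserving bijections; $X$ homogeneous: $\mathrm{Aut}(X)$ acts transitively. An interval is a convex subset; $J$ is regular if for all $x,y\in J$, $g\in\mathrm{Aut}(X)$, $g(x)\in J\Rightarrow g(y)\in J$; proper if neither a singleton nor $X$. A homogeneous chain is simple if it has no proper regular interval. For a proper regular interval $J$, $X/J$ is the chain of equivalence classes of the relation $x\sim_J y\iff\forall g\in\mathrm{Aut}(X)\,(g(x)\in J\Rightarrow g(y)\in J)$ (these classes are the images of $J$ under automorphisms), with the induced order. $\tau_p$: pointwise convergence topology w.r.t. the order topology; $\tau_\partial$: permutation topology (identity neighbourhood base: pointwise stabilizers of finite sets). Roelcke precompact: the Roelcke uniformity (greatest lower bound of left and right uniformities) is totally bounded. *)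

From Stdlib Require Import List.
Import ListNotations.
Set Implicit Arguments.

Definition is_chain {T : Type} (lt : T -> T -> Prop) : Prop :=
  (forall x, ~ lt x x) /\
  (forall x y z, lt x y -> lt y z -> lt x z) /\
  (forall x y, lt x y \/ x = y \/ lt y x).

Definition is_aut {T : Type} (lt : T -> T -> Prop) (f : T -> T) : Prop :=
  (forall x y, lt x y -> lt (f x) (f y)) /\
  (exists g : T -> T, (forall x, g (f x) = x) /\ (forall y, f (g y) = y)).

Definition homogeneous {T : Type} (lt : T -> T -> Prop) : Prop :=
  forall x y, exists f, is_aut lt f /\ f x = y.

Definition is_interval {T : Type} (lt : T -> T -> Prop) (J : T -> Prop) : Prop :=
  (exists x, J x) /\
  (forall x y z, J x -> J z -> lt x y -> lt y z -> J y).

Definition regular_interval {T : Type} (lt : T -> T -> Prop) (J : T -> Prop) : Prop :=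
  is_interval lt J /\
  (forall x y g, J x -> J y -> is_aut lt g -> J (g x) -> J (g y)).

Definition proper_set {T : Type} (J : T -> Prop) : Prop :=
  ~ (exists x, forall y, J y <-> y = x) /\ ~ (forall y, J y).

Definition proper_regular_interval {T : Type} (lt : T -> T -> Prop) (J : T -> Prop) : Prop :=
  regular_interval lt J /\ proper_set J.

Definition is_simple {T : Type} (lt : T -> T -> Prop) : Prop :=
  homogeneous lt /\ ~ (exists J, proper_regular_interval lt J).

Definition sub_lt {T : Type} (lt : T -> T -> Prop) (J : T -> Prop)
  (a b : {x : T | J x}) : Prop := lt (proj1_sig a) (proj1_sig b).

(* The chain X/J: equivalence classes of ~_J with the induced order. *)
Definition simJ {T : Type} (lt : T -> T -> Prop) (J : T -> Prop) (x y : T) : Prop :=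
  forall g, is_aut lt g -> J (g x) -> J (g y).

Definition quotJ {T : Type} (lt : T -> T -> Prop) (J : T -> Prop) : Type :=
  {S : T -> Prop | exists x, forall y, S y <-> simJ lt J x y}.

Definition quot_lt {T : Type} (lt : T -> T -> Prop) (J : T -> Prop)
  (S S' : quotJ lt J) : Prop :=
  exists x y, proj1_sig S x /\ proj1_sig S' y /\ lt x y.

(* Order topology: open sets are unions of open intervals/rays (a,b),
   with a, b possibly absent (= unbounded). *)
Definition in_oint {T : Type} (lt : T -> T -> Prop) (a b : option T) (y : T) : Prop :=
  match a with Some a => lt a y | None => True end /\
  match b with Some b => lt y b | None => True end.

Definition order_open {T : Type} (lt : T -> T -> Prop) (O : T -> Prop) : Prop :=
  forall y, O y -> exists a b, in_oint lt a b y /\ (forall z, in_oint lt a b z -> O z).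

(* Identity neighbourhoods (subsets U of T -> T, intersected with Aut). *)
Definition nbhd1_partial {T : Type} (lt : T -> T -> Prop) (U : (T -> T) -> Prop) : Prop :=
  exists A : list T,
    forall g, is_aut lt g -> (forall x, In x A -> g x = x) -> U g.

(* tau_p: pointwise convergence w.r.t. the order topology. *)
Definition nbhd1_pointwise {T : Type} (lt : T -> T -> Prop) (U : (T -> T) -> Prop) : Prop :=
  exists P : list (T * (T -> Prop)),
    (forall p, In p P -> order_open lt (snd p) /\ snd p (fst p)) /\
    (forall g, is_aut lt g -> (forall p, In p P -> snd p (g (fst p))) -> U g).

Inductive topo := Tp | Tpartial.

Definition nbhd1 (t : topo) {T : Type} (lt : T -> T -> Prop) : ((T -> T) -> Prop) -> Prop :=
  match t with Tp => nbhd1_pointwise lt | Tpartial => nbhd1_partial lt end.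

(* Roelcke precompactness: the Roelcke uniformity (meet of left and right
   uniformities, basic entourages {(f,g) | g in U f U}) is totally bounded:
   for each identity neighbourhood U there is a finite F with Aut = U F U. *)
Definition roelcke_precompact (t : topo) {T : Type} (lt : T -> T -> Prop) : Prop :=
  forall U, nbhd1 t lt U ->
    exists F : list (T -> T),
      (forall f, In f F -> is_aut lt f) /\
      (forall g, is_aut lt g ->
         exists f u1 u2, In f F /\ U u1 /\ U u2 /\ is_aut lt u1 /\ is_aut lt u2 /\
           (forall x, g x = u1 (f (u2 x)))).

(* The classes of ~_J are the
   images of J under automorphisms; choosing for each class c an automorphism chart c
   sending j0 into c identifies X with the lexicographic product of X/J and J, and every
   automorphism g of X becomes the map (c, j) |-> (g^ c, g_c j) for the induced
   automorphism g^ of X/J and fibre automorphisms g_c of J.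
   Restricting the automorphisms that stabilise J, and extending automorphisms of J by
   the identity, transfers Roelcke precompactness from Aut(X) to Aut(J); the projection
   g |-> g^ transfers it to (Aut(X/J), tau_partial), since a basic neighbourhood of X
   maps into the stabiliser of finitely many classes.  Conversely, a basic neighbourhood
   of X only sees finitely many classes C, so Roelcke factorisations of g^ and of the
   fibre maps g_c for c in C assemble into a Roelcke factorisation of g. *)

From Stdlib Require Import List ClassicalEpsilon ProofIrrelevance PropExtensionality
  FunctionalExtensionality Classical.
Import ListNotations.

Definition inv {A : Type} (f : A -> A) (y : A) : A :=
  epsilon (inhabits y) (fun x => f x = y).

Section Automorphisms.
Context {A : Type} (ltA : A -> A -> Prop).

Lemma aut_rinv f y : is_aut ltA f -> f (inv f y) = y.
Proof.
  intros [_ [g [_ Hfg]]].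
  apply (epsilon_spec (inhabits y) (fun x => f x = y)); eauto.
Qed.

Lemma aut_inj f x y : is_aut ltA f -> f x = f y -> x = y.
Proof. intros [_ [g [Hgf _]]] E. rewrite <- (Hgf x), <- (Hgf y), E. reflexivity. Qed.

Lemma aut_linv f x : is_aut ltA f -> inv f (f x) = x.
Proof. intros Hf. apply (aut_inj f); auto. apply aut_rinv; auto. Qed.

Lemma aut_id : is_aut ltA (fun x => x).
Proof. split; auto. exists (fun x => x). auto. Qed.

Lemma aut_comp f g : is_aut ltA f -> is_aut ltA g -> is_aut ltA (fun x => f (g x)).
Proof.
  intros [Hf [f' [F1 F2]]] [Hg [g' [G1 G2]]]. split; auto.
  exists (fun y => g' (f' y)). split; intros; [rewrite F1, G1 | rewrite G2, F2]; auto.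
Qed.

Hypothesis Hc : is_chain ltA.

Lemma chain_irrefl x : ~ ltA x x.
Proof. apply Hc. Qed.

Lemma chain_trans x y z : ltA x y -> ltA y z -> ltA x z.
Proof. apply Hc. Qed.

Lemma chain_total x y : ltA x y \/ x = y \/ ltA y x.
Proof. apply Hc. Qed.

Lemma aut_reflect f x y : is_aut ltA f -> ltA (f x) (f y) -> ltA x y.
Proof.
  intros Hf H. destruct (chain_total x y) as [?|[<-|Hyx]]; auto; exfalso.
  - exact (chain_irrefl _ H).
  - apply (chain_irrefl (f x)). apply (chain_trans _ _ _ H). apply Hf; auto.
Qed.

Lemma mk_aut f : (forall x y, ltA x y -> ltA (f x) (f y)) -> (forall y, exists x, f x = y) ->
  is_aut ltA f.
Proof.
  intros Hm Hs. split; auto. exists (inv f).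
  assert (Hrinv : forall y, f (inv f y) = y).
  { intros y. apply (epsilon_spec (inhabits y) (fun x => f x = y)); auto. }
  split; auto. intros x.
  destruct (chain_total (inv f (f x)) x) as [H|[H|H]]; auto; apply Hm in H;
    rewrite Hrinv in H; destruct (chain_irrefl _ H).
Qed.

Lemma aut_inv f : is_aut ltA f -> is_aut ltA (inv f).
Proof.
  intros Hf. apply mk_aut.
  - intros x y H. apply (aut_reflect f); auto. rewrite !aut_rinv; auto.
  - intros y. exists (f y). apply aut_linv; auto.
Qed.

Lemma open_preimage h O : is_aut ltA h -> order_open ltA O -> order_open ltA (fun x => O (h x)).
Proof.
  intros Hh HO y Hy. destruct (HO _ Hy) as [a [b [[Ha Hb] Hab]]].
  exists (option_map (inv h) a), (option_map (inv h) b). split; [split|].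
  - destruct a as [a|]; simpl in *; auto. apply (aut_reflect h); rewrite ?aut_rinv; auto.
  - destruct b as [b|]; simpl in *; auto. apply (aut_reflect h); rewrite ?aut_rinv; auto.
  - intros z [Za Zb]. apply Hab. split.
    + destruct a as [a|]; simpl in *; auto. rewrite <- (aut_rinv h a); auto. apply Hh; auto.
    + destruct b as [b|]; simpl in *; auto. rewrite <- (aut_rinv h b); auto. apply Hh; auto.
Qed.

End Automorphisms.

Lemma list_of_functions_on {K V : Type} (C : list K) (F : list V) (dflt : V) :
  exists L : list (K -> V),
    (forall l, In l L -> forall d, (In d C -> In (l d) F) /\ (~ In d C -> l d = dflt)) /\
    (forall s : K -> V, (forall d, In d C -> In (s d) F) ->
       exists l, In l L /\ forall d, In d C -> l d = s d).
Proof.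
  induction C as [|c C [L [HL HLs]]].
  - exists [fun _ => dflt]. split.
    + intros l [<-|[]] d. simpl. tauto.
    + intros s _. exists (fun _ => dflt). simpl. tauto.
  - set (upd := fun (l : K -> V) (v : V) (d : K) =>
      if excluded_middle_informative (d = c) then v else l d).
    exists (flat_map (fun l => map (upd l) F) L). split.
    + intros l Hl d. apply in_flat_map in Hl. destruct Hl as [l' [Hl' Hv]].
      apply in_map_iff in Hv. destruct Hv as [v [<- Hv]]. unfold upd.
      destruct (excluded_middle_informative (d = c)) as [->|Hdc]; simpl.
      * split; auto. intros H; exfalso; auto.
      * specialize (HL l' Hl' d). split; [intros [H|H]; [congruence|tauto] | tauto].
    + intros s Hs. destruct (HLs s) as [l' [Hl' Hag]]; [intros; apply Hs; simpl; auto|].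
      exists (upd l' (s c)). split.
      * apply in_flat_map. exists l'. split; auto. apply in_map, Hs. simpl; auto.
      * intros d [<-|Hd]; unfold upd; destruct (excluded_middle_informative _); subst;
          auto; congruence.
Qed.

Lemma roelcke_factors_family {A I : Type} (ltA : A -> A -> Prop) (U : (A -> A) -> Prop)
  (F : list (A -> A)) (k : I -> A -> A) :
  (forall g, is_aut ltA g -> exists f u1 u2, In f F /\ U u1 /\ U u2 /\
     is_aut ltA u1 /\ is_aut ltA u2 /\ forall x, g x = u1 (f (u2 x))) ->
  (forall i, is_aut ltA (k i)) ->
  exists f u1 u2 : I -> A -> A, forall i, In (f i) F /\ U (u1 i) /\ U (u2 i) /\
     is_aut ltA (u1 i) /\ is_aut ltA (u2 i) /\ forall x, k i x = u1 i (f i (u2 i x)).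
Proof.
  intros HF Hk.
  destruct (choice (fun i (p : (A -> A) * ((A -> A) * (A -> A))) =>
    let '(f, (u1, u2)) := p in In f F /\ U u1 /\ U u2 /\
      is_aut ltA u1 /\ is_aut ltA u2 /\ forall x, k i x = u1 (f (u2 x)))) as [p Hp].
  - intros i. destruct (HF (k i) (Hk i)) as [f [u1 [u2 H]]]. exists (f, (u1, u2)). exact H.
  - exists (fun i => fst (p i)), (fun i => fst (snd (p i))), (fun i => snd (snd (p i))).
    intros i. specialize (Hp i). destruct (p i) as [f [u1 u2]]. exact Hp.
Qed.

Definition patch {I B : Type} (C : list I) (k d : I -> B) (i : I) : B :=
  if excluded_middle_informative (In i C) then k i else d i.

Lemma patch_in {I B : Type} (C : list I) (k d : I -> B) i : In i C -> patch C k d i = k i.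
Proof. unfold patch. destruct (excluded_middle_informative _); tauto. Qed.

Lemma patch_out {I B : Type} (C : list I) (k d : I -> B) i : ~ In i C -> patch C k d i = d i.
Proof. unfold patch. destruct (excluded_middle_informative _); tauto. Qed.

Section RegularInterval.
Variables (T : Type) (lt : T -> T -> Prop) (J : T -> Prop) (j0 : T).
Hypotheses (Hc : is_chain lt) (Hh : homogeneous lt)
  (HJ : proper_regular_interval lt J) (Hj0 : J j0).

Local Notation sJ := {x : T | J x}.
Local Notation slt := (@sub_lt T lt J).
Local Notation Q := (quotJ lt J).
Local Notation qlt := (@quot_lt T lt J).

Lemma J_convex x y z : J x -> J z -> lt x y -> lt y z -> J y.
Proof. destruct HJ as [[[_ H] _] _]. eauto. Qed.

Lemma J_regular x y g : J x -> J y -> is_aut lt g -> J (g x) -> J (g y).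
Proof. destruct HJ as [[_ H] _]. eauto. Qed.

Lemma stab_image h y : is_aut lt h -> J (h j0) -> J y -> J (h y).
Proof. intros Hh' H0 Hy. exact (J_regular j0 y h Hj0 Hy Hh' H0). Qed.

Lemma stab_inv h y : is_aut lt h -> J (h j0) -> J y -> J (inv h y).
Proof.
  intros Hh' H0 Hy. apply (J_regular (h j0) y (inv h)); auto.
  - apply (aut_inv lt Hc); auto.
  - rewrite (aut_linv lt); auto.
Qed.

Lemma below_J x y z : ~ J x -> J y -> lt x y -> J z -> lt x z.
Proof.
  intros Hx Hy Hxy Hz. destruct (chain_total lt Hc x z) as [H|[<-|H]]; auto; exfalso; auto.
  apply Hx. apply (J_convex z x y); auto.
Qed.

Lemma above_J x y z : ~ J x -> J y -> lt y x -> J z -> lt z x.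
Proof.
  intros Hx Hy Hyx Hz. destruct (chain_total lt Hc z x) as [H|[->|H]]; auto; exfalso; auto.
  apply Hx. apply (J_convex y x z); auto.
Qed.

Lemma sval_inj (a b : sJ) : proj1_sig a = proj1_sig b -> a = b.
Proof. destruct a, b. simpl. apply subset_eq_compat. Qed.

Lemma sub_chain : is_chain slt.
Proof.
  split; [|split]; unfold sub_lt.
  - intros x. apply (chain_irrefl lt Hc).
  - intros x y z. apply (chain_trans lt Hc).
  - intros x y. destruct (chain_total lt Hc (proj1_sig x) (proj1_sig y)) as [H|[H|H]]; auto.
    right; left. apply sval_inj; auto.
Qed.

(* If [h] maps [y] to another point [x] of [J], then [inv h y] lies in [J] on the other
   side of [y] from [x]. *)
Lemma J_unbounded y : J y -> (exists a, J a /\ lt a y) /\ (exists b, J b /\ lt y b).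
Proof.
  intros Hy.
  assert (Hx : exists x, J x /\ x <> y).
  { destruct HJ as [_ [Hns _]]. apply NNPP. intros Hn. apply Hns. exists y. intros z.
    split; [intros Hz; apply NNPP; intros Hzy; apply Hn; eauto | intros ->; auto]. }
  destruct Hx as [x [Hx Hxy]]. destruct (Hh y x) as [h [Hha Ehy]].
  assert (Hz : J (inv h y)).
  { apply (J_regular x y (inv h)); auto. apply (aut_inv lt Hc); auto.
    rewrite <- Ehy, (aut_linv lt); auto. }
  destruct (chain_total lt Hc x y) as [H|[H|H]]; [| contradiction |].
  - split; [eauto|]. exists (inv h y). split; auto.
    apply (aut_reflect lt Hc h); auto. rewrite (aut_rinv lt), Ehy; auto.
  - split; [|eauto]. exists (inv h y). split; auto.
    apply (aut_reflect lt Hc h); auto. rewrite (aut_rinv lt), Ehy; auto.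
Qed.

Lemma J_open : order_open lt J.
Proof.
  intros y Hy. destruct (J_unbounded y Hy) as [[a [Ha Hay]] [b [Hb Hyb]]].
  exists (Some a), (Some b). split; [split; auto|]. intros z [Za Zb]. apply (J_convex a z b); auto.
Qed.

Lemma simJ_aut g x y : is_aut lt g -> simJ lt J x y -> simJ lt J (g x) (g y).
Proof. intros Hg S h Hh' H. apply (S (fun z => h (g z))); auto. apply aut_comp; auto. Qed.

Lemma simJ_iff h x y : is_aut lt h -> J (inv h x) -> (simJ lt J x y <-> J (inv h y)).
Proof.
  intros Hh' Hx. split.
  - intros S. apply S; auto. apply (aut_inv lt Hc); auto.
  - intros Hy g Hg Hgx. rewrite <- (aut_rinv lt h y) by auto.
    rewrite <- (aut_rinv lt h x) in Hgx by auto.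
    apply (J_regular (inv h x) (inv h y) (fun z => g (h z))); auto. apply aut_comp; auto.
Qed.

Lemma simJ_sym x y : simJ lt J x y -> simJ lt J y x.
Proof.
  intros S. destruct (Hh j0 x) as [h [Hh' Ex]].
  assert (Hx : J (inv h x)) by (rewrite <- Ex, (aut_linv lt); auto).
  assert (Hy : J (inv h y)) by exact (proj1 (simJ_iff h x y Hh' Hx) S).
  exact (proj2 (simJ_iff h y x Hh' Hy) Hx).
Qed.

Definition cls (x : T) : Q := exist _ (simJ lt J x) (ex_intro _ x (fun y => iff_refl _)).

Definition mem (c : Q) (y : T) : Prop := proj1_sig c y.

Lemma quot_ext (c d : Q) : (forall y, mem c y <-> mem d y) -> c = d.
Proof.
  destruct c as [c Hc'], d as [d Hd]. unfold mem. simpl. intros E.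
  assert (c = d) as ->.
  { apply functional_extensionality. intros y. apply propositional_extensionality. auto. }
  apply subset_eq_compat. reflexivity.
Qed.

Lemma mem_cls_self x : mem (cls x) x.
Proof. intros g _ H. exact H. Qed.

Lemma cls_of_mem c y : mem c y -> cls y = c.
Proof.
  intros Hy. apply quot_ext. intros z. destruct c as [S [x Hx]]. unfold mem in *. simpl in *.
  rewrite Hx in Hy |- *. split.
  - intros Hyz g Hg H. apply Hyz, Hy; auto.
  - intros Hxz g Hg H. apply Hxz; auto. apply (simJ_sym x y); auto.
Qed.

Lemma mem_iff c y : mem c y <-> cls y = c.
Proof. split; [apply cls_of_mem | intros <-; apply mem_cls_self]. Qed.

Lemma mem_convex c a b y : mem c a -> mem c b -> lt a y -> lt y b -> mem c y.
Proof.
  destruct c as [S [x Hx]]. unfold mem. simpl. rewrite !Hx.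
  intros Ha Hb Hay Hyb g Hg Hgx. apply (J_convex (g a) _ (g b)); try apply Hg; auto.
Qed.

Lemma quot_lt_mem c d a b : qlt c d -> c <> d -> mem c a -> mem d b -> lt a b.
Proof.
  intros [x [y [Hx [Hy Hxy]]]] Hcd Ha Hb.
  destruct (chain_total lt Hc a b) as [H|[<-|Hba]]; auto; exfalso; apply Hcd.
  - rewrite <- (cls_of_mem c a), <- (cls_of_mem d a); auto.
  - destruct (chain_total lt Hc b x) as [Hbx|[<-|Hxb]].
    + rewrite <- (cls_of_mem c x), <- (cls_of_mem d x); auto. apply (mem_convex d b y); auto.
    + rewrite <- (cls_of_mem c b), <- (cls_of_mem d b); auto.
    + rewrite <- (cls_of_mem c b), <- (cls_of_mem d b); auto. apply (mem_convex c x a); auto.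
Qed.

Definition rep (c : Q) : T := epsilon (inhabits j0) (mem c).

Lemma rep_mem c : mem c (rep c).
Proof.
  unfold rep. apply (epsilon_spec (inhabits j0) (mem c)).
  destruct c as [S [x Hx]]. exists x. unfold mem. simpl. apply Hx, mem_cls_self.
Qed.

Lemma cls_rep c : cls (rep c) = c.
Proof. apply cls_of_mem, rep_mem. Qed.

Definition chart (c : Q) : T -> T :=
  epsilon (inhabits (fun x : T => x)) (fun h => is_aut lt h /\ h j0 = rep c).

Lemma chart_spec c : is_aut lt (chart c) /\ chart c j0 = rep c.
Proof. unfold chart. apply (epsilon_spec (inhabits (fun x : T => x))). apply Hh. Qed.

Lemma chart_aut c : is_aut lt (chart c).
Proof. apply chart_spec. Qed.

Lemma mem_chart c y : mem c y <-> J (inv (chart c) y).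
Proof.
  rewrite <- (cls_rep c) at 1. destruct (chart_spec c) as [Ha E].
  apply simJ_iff; auto. rewrite <- E, (aut_linv lt); auto.
Qed.

Lemma cls_chart c j : J j -> cls (chart c j) = c.
Proof. intros H. apply cls_of_mem, mem_chart. rewrite (aut_linv lt); auto. apply chart_aut. Qed.

Definition coord (x : T) : sJ :=
  exist _ (inv (chart (cls x)) x) (proj1 (mem_chart (cls x) x) (mem_cls_self x)).

Lemma chart_coord x : chart (cls x) (proj1_sig (coord x)) = x.
Proof. apply (aut_rinv lt), chart_aut. Qed.

Lemma coord_chart c (j : sJ) : coord (chart c (proj1_sig j)) = j.
Proof.
  apply sval_inj. simpl. rewrite cls_chart by apply proj2_sig.
  apply (aut_linv lt), chart_aut.
Qed.

Lemma mem_open c : order_open lt (mem c).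
Proof.
  replace (mem c) with (fun y => J (inv (chart c) y)).
  - apply (open_preimage lt Hc); [apply (aut_inv lt Hc), chart_aut | apply J_open].
  - apply functional_extensionality. intros y. apply propositional_extensionality.
    symmetry. apply mem_chart.
Qed.

Definition quot_map (g : T -> T) (c : Q) : Q := cls (g (rep c)).

Lemma quot_map_cls g x : is_aut lt g -> quot_map g (cls x) = cls (g x).
Proof.
  intros Hg. apply cls_of_mem, simJ_aut; auto. exact (rep_mem (cls x)).
Qed.

Lemma quot_map_aut g : is_aut lt g -> is_aut qlt (quot_map g).
Proof.
  intros Hg. split.
  - intros c d [x [y [Hx [Hy Hxy]]]]. apply mem_iff in Hx, Hy. subst c d.
    exists (g x), (g y). rewrite !quot_map_cls by auto.
    split; [apply mem_cls_self | split; [apply mem_cls_self | apply Hg; auto]].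
  - exists (quot_map (inv g)).
    assert (Hi : is_aut lt (inv g)) by (apply (aut_inv lt Hc); auto).
    split; intros c; rewrite <- (cls_rep c), !quot_map_cls by auto;
      rewrite ?(aut_linv lt), ?(aut_rinv lt); auto.
Qed.

(* Through the charts, [X] is the lexicographic product of [X/J] and [J], and
   [wreath psi k] acts on it as [(c, j) |-> (psi c, k c j)]. *)
Definition wreath (psi : Q -> Q) (k : Q -> sJ -> sJ) (x : T) : T :=
  chart (psi (cls x)) (proj1_sig (k (cls x) (coord x))).

Lemma cls_wreath psi k x : cls (wreath psi k x) = psi (cls x).
Proof. apply cls_chart, proj2_sig. Qed.

Lemma coord_wreath psi k x : coord (wreath psi k x) = k (cls x) (coord x).
Proof. apply coord_chart. Qed.

Lemma quot_map_wreath psi k c : quot_map (wreath psi k) c = psi c.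
Proof. unfold quot_map. rewrite cls_wreath, cls_rep. reflexivity. Qed.

Lemma wreath_comp psi1 k1 psi2 k2 x :
  wreath psi1 k1 (wreath psi2 k2 x) =
  wreath (fun c => psi1 (psi2 c)) (fun c j => k1 (psi2 c) (k2 c j)) x.
Proof. unfold wreath at 1. rewrite cls_wreath, coord_wreath. reflexivity. Qed.

Lemma wreath_ext psi psi' k k' x : (forall c, psi c = psi' c) -> (forall c j, k c j = k' c j) ->
  wreath psi k x = wreath psi' k' x.
Proof.
  intros Epsi Ek. replace psi' with psi by (apply functional_extensionality; auto).
  replace k' with k by (do 2 (apply functional_extensionality; intros); auto). reflexivity.
Qed.

Lemma wreath_aut psi k : is_aut qlt psi -> (forall c, is_aut slt (k c)) ->
  is_aut lt (wreath psi k).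
Proof.
  intros Hpsi Hk. apply (mk_aut lt Hc).
  - intros x y Hxy. destruct (classic (cls x = cls y)) as [E|E].
    + unfold wreath. rewrite <- E. apply chart_aut, Hk. unfold sub_lt. simpl. rewrite <- E.
      apply (aut_inv lt Hc); auto. apply chart_aut.
    + apply (quot_lt_mem (psi (cls x)) (psi (cls y))).
      * apply Hpsi. exists x, y. split; [|split]; auto; apply mem_cls_self.
      * intros Ep. apply E, (aut_inj qlt psi); auto.
      * apply mem_iff, cls_wreath.
      * apply mem_iff, cls_wreath.
  - intros y. set (c := inv psi (cls y)).
    exists (chart c (proj1_sig (inv (k c) (coord y)))).
    unfold wreath. rewrite coord_chart, cls_chart by apply proj2_sig.
    unfold c. rewrite (aut_rinv qlt psi), (aut_rinv slt); auto. apply chart_coord.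
Qed.

(* Junk value: [restrict h] is the identity unless [h] is an automorphism stabilising [J]. *)
Definition restrict (h : T -> T) : sJ -> sJ :=
  match excluded_middle_informative (is_aut lt h /\ J (h j0)) with
  | left H => fun j => exist _ (h (proj1_sig j)) (stab_image h _ (proj1 H) (proj2 H) (proj2_sig j))
  | right _ => fun j => j
  end.

Lemma restrict_val h j : is_aut lt h -> J (h j0) -> proj1_sig (restrict h j) = h (proj1_sig j).
Proof.
  intros Ha H0. unfold restrict.
  destruct (excluded_middle_informative _) as [H|Hn]; [reflexivity | tauto].
Qed.

Lemma restrict_aut h : is_aut slt (restrict h).
Proof.
  unfold restrict. destruct (excluded_middle_informative _) as [[Ha H0]|_]; [|apply aut_id].
  apply (mk_aut slt sub_chain).
  - intros x y H. apply Ha, H.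
  - intros y. exists (exist _ _ (stab_inv h _ Ha H0 (proj2_sig y))).
    apply sval_inj. simpl. apply (aut_rinv lt); auto.
Qed.

Definition fibre_map (g : T -> T) (c : Q) : sJ -> sJ :=
  restrict (fun z => inv (chart (quot_map g c)) (g (chart c z))).

Lemma fibre_map_spec g c : is_aut lt g ->
  is_aut lt (fun z => inv (chart (quot_map g c)) (g (chart c z))) /\
  J (inv (chart (quot_map g c)) (g (chart c j0))).
Proof.
  intros Hg. split.
  - apply aut_comp; [apply (aut_inv lt Hc), chart_aut | apply aut_comp; auto; apply chart_aut].
  - apply mem_chart, mem_iff. rewrite <- quot_map_cls, cls_chart; auto.
Qed.

Lemma wreath_decomp g x : is_aut lt g -> g x = wreath (quot_map g) (fibre_map g) x.
Proof.
  intros Hg. destruct (fibre_map_spec g (cls x) Hg) as [Ha H0].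
  unfold wreath, fibre_map. rewrite restrict_val, chart_coord by auto.
  symmetry. apply (aut_rinv lt), chart_aut.
Qed.

Definition extend (h : sJ -> sJ) (x : T) : T :=
  match excluded_middle_informative (J x) with
  | left H => proj1_sig (h (exist _ x H))
  | right _ => x
  end.

Lemma extend_in h x (H : J x) : extend h x = proj1_sig (h (exist _ x H)).
Proof.
  unfold extend. destruct (excluded_middle_informative (J x)) as [H'|]; [|contradiction].
  do 3 f_equal. apply proof_irrelevance.
Qed.

Lemma extend_out h x : ~ J x -> extend h x = x.
Proof. unfold extend. destruct (excluded_middle_informative (J x)); tauto. Qed.

Lemma extend_aut h : is_aut slt h -> is_aut lt (extend h).
Proof.
  intros Hh'. apply (mk_aut lt Hc).
  - intros x y Hxy.
    destruct (classic (J x)) as [Hx|Hx]; destruct (classic (J y)) as [Hy|Hy].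
    + rewrite (extend_in _ x Hx), (extend_in _ y Hy). apply Hh', Hxy.
    + rewrite (extend_in _ x Hx), (extend_out _ y Hy). apply (above_J y x); auto. apply proj2_sig.
    + rewrite (extend_out _ x Hx), (extend_in _ y Hy). apply (below_J x y); auto. apply proj2_sig.
    + rewrite (extend_out _ x Hx), (extend_out _ y Hy). auto.
  - intros y. destruct (classic (J y)) as [Hy|Hy]; [|exists y; apply extend_out; auto].
    destruct (inv h (exist _ y Hy)) as [x Hx] eqn:Ex. exists x.
    rewrite (extend_in _ _ Hx), <- Ex, (aut_rinv slt); auto.
Qed.

Definition trace (a : option T) : option sJ :=
  match a with
  | Some a0 =>
      match excluded_middle_informative (J a0) with
      | left H => Some (exist _ a0 H)
      | right _ => None
      end
  | None => None
  end.

Lemma sub_open O : order_open lt O -> order_open slt (fun j : sJ => O (proj1_sig j)).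
Proof.
  intros HO y Hy. destruct (HO _ Hy) as [a [b [[Ha Hb] Hab]]].
  exists (trace a), (trace b). split.
  - split; [destruct a as [a|] | destruct b as [b|]]; simpl; auto;
      destruct (excluded_middle_informative _); simpl; auto.
  - intros z [Za Zb]. apply Hab. split.
    + destruct a as [a|]; simpl in *; auto.
      destruct (excluded_middle_informative (J a)); auto.
      apply (below_J a (proj1_sig y)); auto; apply proj2_sig.
    + destruct b as [b|]; simpl in *; auto.
      destruct (excluded_middle_informative (J b)); auto.
      apply (above_J b (proj1_sig y)); auto; apply proj2_sig.
Qed.

Definition lift_open (O : sJ -> Prop) (x : T) : Prop := exists H : J x, O (exist _ x H).

Lemma lift_open_open O : order_open slt O -> order_open lt (lift_open O).
Proof.
  intros HO x [Hx Hx']. destruct (HO _ Hx') as [a [b [[Ha Hb] Hab]]].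
  assert (Hl : exists l, J l /\ lt l x /\ forall z : sJ, lt l (proj1_sig z) ->
    match a with Some a => slt a z | None => True end).
  { destruct a as [[l Hl]|].
    - exists l. split; [exact Hl | split; [exact Ha | intros z Hz; exact Hz]].
    - destruct (J_unbounded x Hx) as [[l [Hl Hlx]] _]. exists l. auto. }
  assert (Hu : exists u, J u /\ lt x u /\ forall z : sJ, lt (proj1_sig z) u ->
    match b with Some b => slt z b | None => True end).
  { destruct b as [[u Hu]|].
    - exists u. split; [exact Hu | split; [exact Hb | intros z Hz; exact Hz]].
    - destruct (J_unbounded x Hx) as [_ [u [Hu Hxu]]]. exists u. auto. }
  destruct Hl as [l [Hl [Hlx Hla]]], Hu as [u [Hu [Hxu Hub]]].
  exists (Some l), (Some u). split; [split; auto|]. intros z [Zl Zu]. simpl in Zl, Zu.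
  assert (Hz : J z) by (apply (J_convex l z u); auto).
  exists Hz. apply Hab. split; [apply (Hla (exist _ z Hz)) | apply (Hub (exist _ z Hz))]; auto.
Qed.

Lemma nbhd_restrict t UJ : nbhd1 t slt UJ ->
  exists UX, nbhd1 t lt UX /\ forall u, is_aut lt u -> UX u -> J (u j0) /\ UJ (restrict u).
Proof.
  destruct t; simpl.
  - intros [P [HPo HP]].
    set (lift := fun p : sJ * (sJ -> Prop) => (proj1_sig (fst p), lift_open (snd p))).
    exists (fun g => forall p, In p ((j0, J) :: map lift P) -> snd p (g (fst p))). split.
    + eexists. split; [|intros g _ Hg; exact Hg]. intros p [<-|Hp]; [split; auto; apply J_open|].
      apply in_map_iff in Hp. destruct Hp as [[[x Hx] O] [<- Hq]].
      destruct (HPo _ Hq) as [HO Hx']. split; [apply lift_open_open; auto | exists Hx; auto].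
    + intros u Hu HUX. assert (H0 : J (u j0)) by (apply (HUX (j0, J)); left; auto).
      split; auto. apply HP; [apply restrict_aut|]. intros p Hp.
      destruct (HUX (lift p)) as [Hx HO]; [right; apply in_map; auto|].
      replace (restrict u (fst p)) with (exist J (u (proj1_sig (fst p))) Hx); auto.
      apply sval_inj. simpl. rewrite restrict_val; auto.
  - intros [A HA]. exists (fun g => forall x, In x (j0 :: map (@proj1_sig T J) A) -> g x = x).
    split; [exists (j0 :: map (@proj1_sig T J) A); auto|].
    intros u Hu HUX. assert (H0 : J (u j0)) by (rewrite HUX; [auto | left; auto]).
    split; auto. apply HA; [apply restrict_aut|]. intros x Hx. apply sval_inj.
    rewrite restrict_val; auto. apply HUX. right. apply in_map; auto.
Qed.

Lemma nbhd_quot_fix t (C : list Q) :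
  exists UX, nbhd1 t lt UX /\ forall u, is_aut lt u -> UX u -> forall c, In c C -> quot_map u c = c.
Proof.
  destruct t; simpl.
  - exists (fun g => forall p, In p (map (fun c => (rep c, mem c)) C) -> snd p (g (fst p))).
    split.
    + eexists. split; [|intros g _ Hg; exact Hg]. intros p Hp.
      apply in_map_iff in Hp. destruct Hp as [c [<- _]]. split; [apply mem_open | apply rep_mem].
    + intros u Hu HUX c Hc'. apply cls_of_mem, (HUX (rep c, mem c)), in_map_iff. eauto.
  - exists (fun g => forall x, In x (map rep C) -> g x = x). split; [exists (map rep C); auto|].
    intros u Hu HUX c Hc'. unfold quot_map. rewrite HUX; [apply cls_rep | apply in_map; auto].
Qed.

Lemma nbhd_wreath t UX : nbhd1 t lt UX ->
  exists (C : list Q) (UJ : (sJ -> sJ) -> Prop), nbhd1 t slt UJ /\ UJ (fun j => j) /\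
    forall psi k, is_aut qlt psi -> (forall c, is_aut slt (k c)) ->
      (forall c, In c C -> psi c = c /\ UJ (k c)) -> UX (wreath psi k).
Proof.
  destruct t; simpl.
  - intros [P [HPo HP]].
    set (pull := fun p : T * (T -> Prop) =>
      (coord (fst p), fun j : sJ => snd p (chart (cls (fst p)) (proj1_sig j)))).
    assert (HPJ : forall q, In q (map pull P) -> order_open slt (snd q) /\ snd q (fst q)).
    { intros q Hq. apply in_map_iff in Hq. destruct Hq as [p [<- Hp]]. simpl. split.
      - apply (sub_open (fun x => snd p (chart (cls (fst p)) x))).
        apply (open_preimage lt Hc); [apply chart_aut | apply HPo; auto].
      - rewrite chart_coord. apply HPo; auto. }
    exists (map cls (map fst P)), (fun g => forall q, In q (map pull P) -> snd q (g (fst q))).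
    split; [exists (map pull P); auto | split; [intros q Hq; apply HPJ; auto|]].
    intros psi k Hpsi Hk HCk. apply HP; [apply wreath_aut; auto|]. intros p Hp.
    destruct (HCk (cls (fst p))) as [Hfix HU]; [do 2 apply in_map; auto|].
    unfold wreath. rewrite Hfix. apply (HU (pull p)), in_map; auto.
  - intros [A HA]. exists (map cls A), (fun g => forall b, In b (map coord A) -> g b = b).
    split; [exists (map coord A); auto | split; auto].
    intros psi k Hpsi Hk HCk. apply HA; [apply wreath_aut; auto|]. intros x Hx.
    destruct (HCk (cls x)) as [Hfix HU]; [apply in_map; auto|].
    unfold wreath. rewrite Hfix, HU; [apply chart_coord | apply in_map; auto].
Qed.

Lemma roelcke_sub t : roelcke_precompact t lt -> roelcke_precompact t slt.
Proof.
  intros RP UJ HUJ. destruct (nbhd_restrict t UJ HUJ) as [UX [HUX Hres]].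
  destruct (RP UX HUX) as [F [HFa HF]].
  exists (map restrict F). split.
  { intros f' Hf'. apply in_map_iff in Hf'. destruct Hf' as [f [<- _]]. apply restrict_aut. }
  intros g Hg.
  destruct (HF (extend g) (extend_aut g Hg)) as [f [u1 [u2 [Hf [U1 [U2 [A1 [A2 E]]]]]]]].
  destruct (Hres u1 A1 U1) as [J1 R1], (Hres u2 A2 U2) as [J2 R2].
  assert (Af : is_aut lt f) by auto.
  assert (Jf : J (f j0)).
  { assert (Hw : J (inv u2 j0)) by (apply stab_inv; auto).
    assert (H1 : J (u1 (f j0))).
    { rewrite <- (aut_rinv lt u2 j0), <- E, (extend_in _ _ Hw) by auto. apply proj2_sig. }
    rewrite <- (aut_linv lt u1 (f j0)) by auto. apply stab_inv; auto. }
  exists (restrict f), (restrict u1), (restrict u2).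
  split; [apply in_map; auto|]. do 4 (split; [auto using restrict_aut|]).
  intros [x Hx]. apply sval_inj. rewrite !restrict_val by auto. simpl.
  rewrite <- E, (extend_in _ _ Hx). reflexivity.
Qed.

Lemma roelcke_quot t : roelcke_precompact t lt -> roelcke_precompact Tpartial qlt.
Proof.
  intros RP UQ [C HC]. destruct (nbhd_quot_fix t C) as [UX [HUX Hfix]].
  destruct (RP UX HUX) as [F [HFa HF]].
  exists (map quot_map F). split.
  { intros f' Hf'. apply in_map_iff in Hf'. destruct Hf' as [f [<- Hf]]. apply quot_map_aut; auto. }
  intros psi Hpsi.
  assert (Hl : is_aut lt (wreath psi (fun _ j => j))) by (apply wreath_aut; auto using aut_id).
  destruct (HF _ Hl) as [f [u1 [u2 [Hf [U1 [U2 [A1 [A2 E]]]]]]]].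
  exists (quot_map f), (quot_map u1), (quot_map u2).
  split; [apply in_map; auto|].
  do 2 (split; [apply HC; [apply quot_map_aut | apply Hfix]; auto|]).
  do 2 (split; [apply quot_map_aut; auto|]).
  intros c. rewrite <- (quot_map_wreath psi (fun _ j => j) c), <- (cls_rep c).
  rewrite !quot_map_cls by auto. rewrite E. reflexivity.
Qed.

(* A Roelcke factorisation [v1 psi v2] of the quotient map, with [v2] fixing [C], and
   factorisations of the fibre maps over [C] assemble into one of [g]; off [C] the
   middle factor is trivial and the fibre map is absorbed into the right factor. *)
Lemma wreath_factor g psi v1 v2 (C : list Q) (l a b : Q -> sJ -> sJ) x :
  is_aut lt g -> is_aut qlt psi -> is_aut qlt v2 -> (forall c, In c C -> v2 c = c) ->
  (forall c, quot_map g c = v1 (psi (v2 c))) ->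
  (forall c, In c C -> forall j, fibre_map g c j = b c (l c (a c j))) ->
  (forall c, ~ In c C -> l c = fun j => j) ->
  g x = wreath v1 (fun c => patch C b (fun _ j => j) (inv psi c))
          (wreath psi l (wreath v2 (patch C a (fibre_map g)) x)).
Proof.
  intros Hg Hpsi Hv2 Hfix Eq Hfib Hl.
  rewrite (wreath_decomp g x Hg), !wreath_comp. apply wreath_ext; auto.
  intros c j. rewrite (aut_linv qlt psi) by auto.
  destruct (classic (In c C)) as [Hin|Hout].
  - rewrite Hfix, !patch_in; auto.
  - assert (Hout2 : ~ In (v2 c) C).
    { intros Hin. apply Hout. rewrite <- (aut_inj qlt v2 (v2 c) c Hv2); auto. }
    rewrite Hl, !patch_out; auto.
Qed.

Lemma roelcke_wreath t :
  roelcke_precompact t slt -> roelcke_precompact Tpartial qlt -> roelcke_precompact t lt.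
Proof.
  intros RPJ RPQ UX HUX.
  destruct (nbhd_wreath t UX HUX) as [C [UJ [HUJ [UJ_id HUXw]]]].
  destruct (RPQ (fun v => forall c, In c C -> v c = c)) as [FQ [HFQ HDQ]]; [exists C; auto|].
  destruct (RPJ UJ HUJ) as [FJ [HFJ HDJ]].
  destruct (list_of_functions_on C FJ (fun j : sJ => j)) as [L [HL HLs]].
  assert (HLa : forall l c, In l L -> is_aut slt (l c)).
  { intros l c Hl. destruct (classic (In c C)) as [Hin|Hout].
    - apply HFJ, (HL l Hl c); auto.
    - rewrite (proj2 (HL l Hl c) Hout). apply aut_id. }
  exists (flat_map (fun psi => map (wreath psi) L) FQ). split.
  { intros w Hw. apply in_flat_map in Hw. destruct Hw as [psi [Hpsi Hw]].
    apply in_map_iff in Hw. destruct Hw as [l [<- Hl]]. apply wreath_aut; auto. }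
  intros g Hg.
  destruct (HDQ (quot_map g) (quot_map_aut g Hg))
    as [psi [v1 [v2 [Hpsi [V1 [V2 [Av1 [Av2 Eq]]]]]]]].
  destruct (roelcke_factors_family slt UJ FJ (fibre_map g) HDJ (fun c => restrict_aut _))
    as [f [b [a Hfba]]].
  destruct (HLs f) as [l [Hl Hlf]]; [intros c _; apply Hfba|].
  assert (Hpatch_a : forall c, is_aut slt (patch C a (fibre_map g) c)).
  { intros c. destruct (classic (In c C)); [rewrite patch_in | rewrite patch_out];
      auto; [apply Hfba | apply restrict_aut]. }
  assert (Hpatch_b : forall c, is_aut slt (patch C b (fun _ j => j) c) /\
                               UJ (patch C b (fun _ j => j) c)).
  { intros c. destruct (classic (In c C)); [rewrite patch_in | rewrite patch_out];
      auto; [split; apply Hfba | split; [apply aut_id | exact UJ_id]]. }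
  exists (wreath psi l), (wreath v1 (fun c => patch C b (fun _ j => j) (inv psi c))),
    (wreath v2 (patch C a (fibre_map g))).
  split; [apply in_flat_map; exists psi; split; [auto | apply in_map; auto]|].
  split.
  { apply HUXw; auto.
    - intros c. apply Hpatch_b.
    - intros c Hin. split; [apply V1 | apply Hpatch_b]; auto. }
  split.
  { apply HUXw; auto.
    intros c Hin. rewrite patch_in by auto. split; [apply V2 | apply Hfba]; auto. }
  split; [apply wreath_aut; auto; intros c; apply Hpatch_b|]. split; [apply wreath_aut; auto|].
  intros x. apply wreath_factor; auto.
  - intros c Hin j. rewrite Hlf by auto. apply Hfba.
  - intros c Hout. apply (HL l Hl c), Hout.
Qed.

End RegularInterval.

Lemma roelcke_precompact_iff_interval (T : Type) (lt : T -> T -> Prop) (J : T -> Prop) t :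
  is_chain lt -> homogeneous lt -> proper_regular_interval lt J ->
  roelcke_precompact t lt <->
    roelcke_precompact t (@sub_lt T lt J) /\ roelcke_precompact Tpartial (@quot_lt T lt J).
Proof.
  intros Hc Hh HJ. pose proof HJ as [[[[j0 Hj0] _] _] _]. split.
  - intros RP. split.
    + exact (roelcke_sub T lt J j0 Hc Hh HJ Hj0 t RP).
    + exact (roelcke_quot T lt J j0 Hc Hh HJ Hj0 t RP).
  - intros [RPJ RPQ]. exact (roelcke_wreath T lt J j0 Hc Hh HJ Hj0 t RPJ RPQ).
Qed.

Theorem theorem5p2 (T : Type) (lt : T -> T -> Prop) (t : topo) :
  is_chain lt -> homogeneous lt -> ~ is_simple lt ->
  (roelcke_precompact t lt <->
     (forall J : T -> Prop, proper_regular_interval lt J ->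
        roelcke_precompact t (@sub_lt T lt J) /\
        roelcke_precompact Tpartial (@quot_lt T lt J))) /\
  (roelcke_precompact t lt <->
     (exists J : T -> Prop, proper_regular_interval lt J /\
        roelcke_precompact t (@sub_lt T lt J) /\
        roelcke_precompact Tpartial (@quot_lt T lt J))).
Proof.
  intros Hc Hh Hns.
  assert (HJ0 : exists J, proper_regular_interval lt J).
  { apply NNPP. intros Hn. apply Hns. split; auto. }
  destruct HJ0 as [J0 HJ0].
  pose proof (fun J => roelcke_precompact_iff_interval T lt J t Hc Hh) as Hiff.
  split; split.
  - intros RP J HJ. apply Hiff; auto.
  - intros H. apply (Hiff J0); auto.
  - intros RP. exists J0. split; [| apply Hiff]; auto.
  - intros [J [HJ RPs]]. apply (Hiff J); auto.
Qed.
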